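(* Let $M$ be a nondegenerate $(0,1)$-matrix of order $n$, and let $A$ be the matrix of order $n+1$ obtained from $M$ by adding an $(n+1)$th row $(0,\dots,0,1)$ and an $(n+1)$th column consisting of $1$'s. Write $A^{-1}=(l_{ij})$. Then for each $i=1,\dots,n$, $\sum_{j=1}^{n+1}|l_{ij}|\ge2$. If $|\det M|=h_n$, then $\sum_{j=1}^{n+1}|l_{ij}|=2$ for all $i=1,\dots,n$. Consequently, if $\sum_{j=1}^{n+1}|l_{ij}|>2$ for some $i$, then $|\det M|<h_n$.
   Context: $h_n$ denotes the maximal value of the determinant of an $n\times n$ matrix with all entries in $\{0,1\}$. *)

From HB Require Import structures.
From mathcomp Require Import all_boot all_order all_algebra.
Set Implicit Arguments. Unset Strict Implicit. Unset Printing Implicit Defensive.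
Import Order.TTheory GRing.Theory Num.Theory.
Local Open Scope ring_scope.

(* A (0,1)-matrix of order n is encoded by a boolean matrix; its integer
   realisation has entries 0 or 1. *)
Definition int01 (n : nat) (B : 'M[bool]_n) : 'M[int]_n :=
  map_mx (fun b : bool => (b : nat)%:Z) B.

(* h n = maximal value of the determinant of an n x n (0,1)-matrix.
   (The identity matrix has determinant 1 > 0, so starting the max at 0 is harmless.) *)
Definition h (n : nat) : int :=
  \big[Num.max/0]_(B : 'M[bool]_n) \det (int01 B).

(* A = [ M  1 ]
       [ 0  1 ]  : the (n+1)-th row is (0,...,0,1), the (n+1)-th column is all 1's. *)
Definition augment (R : nzRingType) (n : nat) (M : 'M[R]_n) : 'M[R]_n.+1 :=
  \matrix_(i < n.+1, j < n.+1)
    match unlift ord_max i, unlift ord_max j with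
    | Some i', Some j' => M i' j'
    | _, None => 1
    | None, Some _ => 0
    end.

Definition inv_row_abs_sum (R : realFieldType) (n : nat) (M : 'M[R]_n) (i : 'I_n) : R :=
  \sum_(j < n.+1) `| (invmx (augment M)) (lift ord_max i) j |.

From HB Require Import structures.
From mathcomp Require Import all_boot all_order all_algebra perm.
From mathcomp Require Import lra.
Set Implicit Arguments. Unset Strict Implicit. Unset Printing Implicit Defensive.
Import Order.TTheory GRing.Theory Num.Theory.
Local Open Scope ring_scope.

(* Let M be a nondegenerate (0,1)-matrix of order n, A = augment M, and let
   l = (l_1,...,l_n) be the i-th row of M^-1.

   1. A^-1 = [M^-1, -M^-1 1; 0, 1], so the i-th row of A^-1 is
      (l_1, ..., l_n, -(l_1 + ... + l_n)) and the row sum of absolute values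
      is  S = sum_k |l_k| + |sum_k l_k|.
   2. Splitting l into its positive mass P and negative mass N gives
      S = P + N + |P - N| = 2 max(P, N); moreover P >= l . c for every
      (0,1)-vector c, and both P and -N are attained as l . c.
   3. Cramer's rule: replacing column i of M by c multiplies det M by l . c.
   Taking c = column i of M gives P >= l . c = 1, hence S >= 2.  If S > 2,
   some (0,1)-vector c has |l . c| > 1, so the (0,1)-matrix obtained by
   replacing column i by c has determinant larger than |det M| in absolute
   value, whence |det M| < h_n.  The equality case follows from both. *)

Section ZeroOneCombinations.
Variables (R : realDomainType) (n : nat) (x : 'I_n -> R).

Definition pos_mass : R := \sum_(k | 0 <= x k) x k.
Definition neg_mass : R := \sum_(k | x k < 0) - x k.

Lemma sum_indicator (P : pred 'I_n) :
  \sum_k x k * (P k)%:R = \sum_(k | P k) x k.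
Proof.
by rewrite [RHS]big_mkcond; apply: eq_bigr => k _; case: (P k); rewrite ?mulr1 ?mulr0.
Qed.

Lemma sum_split_mass : \sum_k x k = pos_mass - neg_mass.
Proof.
rewrite /neg_mass sumrN opprK (bigID (fun k => 0 <= x k)) /=; congr (_ + _).
by apply: eq_bigl => k; rewrite ltNge.
Qed.

Lemma sum_norm_mass : \sum_k `|x k| = pos_mass + neg_mass.
Proof.
rewrite (bigID (fun k => 0 <= x k)) /=; congr (_ + _).
  by apply: eq_bigr => k x0; rewrite ger0_norm.
by apply: eq_big => [k | k]; rewrite -ltNge // => x0; rewrite ltr0_norm.
Qed.

Lemma mass_ge0 : 0 <= pos_mass /\ 0 <= neg_mass.
Proof.
by split; apply: sumr_ge0 => k //; rewrite oppr_ge0 => /ltW.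
Qed.

Lemma norm_sum_mass_ge :
  2 * pos_mass <= \sum_k `|x k| + `|\sum_k x k| /\
  2 * neg_mass <= \sum_k `|x k| + `|\sum_k x k|.
Proof.
rewrite sum_norm_mass sum_split_mass.
have := ler_norm (pos_mass - neg_mass); have := ler_norm (neg_mass - pos_mass).
by rewrite distrC; split; lra.
Qed.

Lemma norm_sum_mass_eq :
  \sum_k `|x k| + `|\sum_k x k| = 2 * pos_mass \/
  \sum_k `|x k| + `|\sum_k x k| = 2 * neg_mass.
Proof.
rewrite sum_norm_mass sum_split_mass.
have [PN|PN] := leP neg_mass pos_mass.
  by left; rewrite ger0_norm ?subr_ge0 //; lra.
by right; rewrite ltr0_norm ?subr_lt0 //; lra.
Qed.

Lemma zero_one_le_pos_mass (c : 'I_n -> R) :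
  (forall k, c k = 0 \/ c k = 1) -> \sum_k x k * c k <= pos_mass.
Proof.
move=> c01; rewrite /pos_mass [X in _ <= X]big_mkcond; apply: ler_sum => k _.
by case: (c01 k) => ->; rewrite ?mulr0 ?mulr1; case: (leP 0 (x k)) => // /ltW.
Qed.

Lemma indicator_zero_one (P : pred 'I_n) (k : 'I_n) :
  (P k)%:R = 0 :> R \/ (P k)%:R = 1 :> R.
Proof. by case: (P k); [right | left]. Qed.

(* The indicator of the nonnegative (resp. negative) entries attains P
   (resp. -N), so some (0,1)-combination has absolute value max(P, N). *)
Lemma zero_one_attains_norm_sum :
  exists2 c : 'I_n -> R, (forall k, c k = 0 \/ c k = 1) &
    2 * `|\sum_k x k * c k| = \sum_k `|x k| + `|\sum_k x k|.
Proof.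
have [P0 N0] := mass_ge0.
case: norm_sum_mass_eq => ->.
  exists (fun k => (0 <= x k)%R%:R); first exact: indicator_zero_one.
  by rewrite sum_indicator ger0_norm.
exists (fun k => (x k < 0)%R%:R); first exact: indicator_zero_one.
by rewrite sum_indicator -normrN -sumrN ger0_norm.
Qed.

End ZeroOneCombinations.

Section ZeroOneDeterminants.
Variable R : realDomainType.

Lemma zero_one_int01 n (N : 'M[R]_n) :
  (forall i j, N i j = 0 \/ N i j = 1) ->
  N = map_mx intr (int01 (\matrix_(i, j) (N i j == 1))).
Proof.
move=> N01; apply/matrixP => i j; rewrite !mxE.
by case: (N01 i j) => ->; rewrite ?eqxx // eq_sym oner_eq0.
Qed.

Lemma det_le_h n (N : 'M[R]_n) :
  (forall i j, N i j = 0 \/ N i j = 1) -> \det N <= (h n)%:~R.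
Proof.
move=> /zero_one_int01 ->; rewrite det_map_mx ler_int.
exact: (le_bigmax 0 (fun B => \det (int01 B))).
Qed.

(* For negative determinants, swap two rows (n >= 2; otherwise det >= 0). *)
Lemma abs_det_le_h n (N : 'M[R]_n) :
  (forall i j, N i j = 0 \/ N i j = 1) -> `|\det N| <= (h n)%:~R.
Proof.
move=> N01; have [d0|d0] := leP 0 (\det N).
  by rewrite ger0_norm //; exact: det_le_h.
rewrite ltr0_norm //; move: N N01 d0; case: n => [|[|m]] N N01 d0.
- by rewrite det_mx00 ltr10 in d0.
- by move: d0; rewrite det_mx11; case: (N01 0 0) => ->; rewrite ?ltxx ?ltr10.
-
  set N' := row_perm (tperm 0 1) N.
  have N'01 i j : N' i j = 0 \/ N' i j = 1 by rewrite mxE; exact: N01.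
  have := det_le_h N'01.
  by rewrite /N' row_permE det_mulmx det_perm odd_tperm /= expr1 mulN1r.
Qed.

End ZeroOneDeterminants.

Section Augment.
Variables (R : comUnitRingType) (n : nat) (M : 'M[R]_n).

Lemma augment_lift r s : augment M (lift ord_max r) (lift ord_max s) = M r s.
Proof. by rewrite mxE !liftK. Qed.

Lemma augment_last_col r : augment M r ord_max = 1.
Proof. by rewrite mxE unlift_none; case: unlift. Qed.

Lemma augment_last_row s : augment M ord_max (lift ord_max s) = 0.
Proof. by rewrite mxE unlift_none liftK. Qed.

(* Expanding along the last row (0, ..., 0, 1). *)
Lemma det_augment : \det (augment M) = \det M.
Proof.
rewrite (expand_det_row _ ord_max) (bigD1_ord ord_max) //= big1 ?addr0.
  rewrite augment_last_col mul1r /cofactor addnn -signr_odd odd_double mul1r.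
  by congr (\det _); apply/matrixP => a b; rewrite !mxE !liftK.
by move=> j _; rewrite augment_last_row mul0r.
Qed.

Hypothesis M_unit : M \in unitmx.
Variable i : 'I_n.

Let y (j : 'I_n.+1) : R := invmx (augment M) (lift ord_max i) j.

Lemma inv_augment_row (c : 'I_n.+1) :
  y ord_max * augment M ord_max c +
  \sum_k y (lift ord_max k) * augment M (lift ord_max k) c = (lift ord_max i == c)%:R.
Proof.
have A_unit : augment M \in unitmx by rewrite unitmxE det_augment.
rewrite -(@bigD1_ord _ _ _ _ ord_max xpredT (fun j => y j * augment M j c)) //.
by have := congr1 (fun B : 'M_n.+1 => B (lift ord_max i) c) (mulVmx A_unit); rewrite !mxE.
Qed.

(* The first n entries of row i of A^-1 solve x M = e_i, so form row i of M^-1. *)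
Lemma inv_augment_lift k : y (lift ord_max k) = invmx M i k.
Proof.
pose x : 'rV[R]_n := \row_k y (lift ord_max k).
have xM : x *m M = delta_mx 0 i.
  apply/rowP => j; rewrite !mxE.
  have := inv_augment_row (lift ord_max j).
  rewrite augment_last_row mulr0 add0r (inj_eq lift_inj) eq_sym => <-.
  by apply: eq_bigr => r _; rewrite mxE augment_lift.
have := congr1 (fun v : 'rV_n => v 0 k) (mulmxK M_unit x).
by rewrite xM -rowE !mxE.
Qed.

(* The last column of A is all ones, so row i of A^-1 sums to 0. *)
Lemma inv_augment_last : y ord_max = - \sum_k invmx M i k.
Proof.
have := inv_augment_row ord_max; rewrite eq_sym (negbTE (neq_lift _ _)).
under eq_bigr do rewrite augment_last_col mulr1 inv_augment_lift.
by rewrite augment_last_col mulr1 => /eqP; rewrite addr_eq0 => /eqP.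
Qed.

End Augment.

Lemma inv_row_abs_sumE (R : realFieldType) n (M : 'M[R]_n) (i : 'I_n) :
  M \in unitmx ->
  inv_row_abs_sum M i = \sum_k `|invmx M i k| + `|\sum_k invmx M i k|.
Proof.
move=> M_unit; rewrite /inv_row_abs_sum (bigD1_ord ord_max) //= addrC.
rewrite inv_augment_last // normrN; congr (_ + _).
by apply: eq_bigr => k _; rewrite inv_augment_lift.
Qed.

Section ReplaceColumn.
Variables (R : comUnitRingType) (n : nat) (M : 'M[R]_n) (i : 'I_n) (c : 'I_n -> R).

Definition replace_col : 'M[R]_n := \matrix_(r, s) if s == i then c r else M r s.

Lemma det_replace_col :
  M \in unitmx -> \det replace_col = \det M * \sum_k invmx M i k * c k.
Proof.
move=> M_unit; rewrite (expand_det_col _ i) mulr_sumr; apply: eq_bigr => r _.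
have -> : cofactor replace_col r i = cofactor M r i.
  rewrite /cofactor; congr (_ * \det _); apply/matrixP => a b.
  by rewrite !mxE eq_sym (negbTE (neq_lift _ _)).
by rewrite mxE eqxx /invmx M_unit mxE -mulrA mulVKr // mxE mulrC.
Qed.

End ReplaceColumn.

Section InverseRows.
Variables (R : realFieldType) (n : nat) (M : 'M[R]_n).
Hypothesis M01 : forall i j, M i j = 0 \/ M i j = 1.
Hypothesis M_unit : M \in unitmx.
Variable i : 'I_n.

Let l (k : 'I_n) : R := invmx M i k.

(* Row i of M^-1 times column i of M is 1, a (0,1)-combination, so P >= 1. *)
Lemma inv_row_pos_mass_ge1 : 1 <= pos_mass l.
Proof.
have := zero_one_le_pos_mass l (fun k => M01 k i).
have := congr1 (fun B : 'M_n => B i i) (mulVmx M_unit).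
by rewrite !mxE eqxx => ->.
Qed.

Lemma abs_det_lt_h_of_comb (c : 'I_n -> R) :
  (forall k, c k = 0 \/ c k = 1) -> 1 < `|\sum_k l k * c k| ->
  `|\det M| < (h n)%:~R.
Proof.
move=> c01 lc_gt1; apply: lt_le_trans (abs_det_le_h (N := replace_col M i c) _).
  rewrite det_replace_col // normrM ltr_pMr // normr_gt0 -unitfE.
  exact: M_unit.
by move=> r s; rewrite mxE; case: (s == i).
Qed.

Lemma inv_row_abs_sum_ge2 : 2 <= inv_row_abs_sum M i.
Proof.
rewrite inv_row_abs_sumE //; have [pos_le _] := norm_sum_mass_ge l.
by apply: le_trans pos_le; rewrite ler_peMr ?inv_row_pos_mass_ge1.
Qed.

Lemma inv_row_abs_sum_gt2 : 2 < inv_row_abs_sum M i -> `|\det M| < (h n)%:~R.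
Proof.
rewrite inv_row_abs_sumE // => S_gt2.
have [c c01 cE] := zero_one_attains_norm_sum l.
apply: (abs_det_lt_h_of_comb c01).
by rewrite -(ltr_pM2l (_ : 0 < 2)) // mulr1 cE.
Qed.

End InverseRows.

Theorem theorem9p1 (R : realFieldType) (n : nat) (M : 'M[R]_n)
  (H01 : forall i j, M i j = 0 \/ M i j = 1)
  (Hnd : \det M != 0) :
  (forall i : 'I_n, 2 <= inv_row_abs_sum M i) /\
  (`|\det M| = (h n)%:~R -> forall i : 'I_n, inv_row_abs_sum M i = 2) /\
  ((exists i : 'I_n, 2 < inv_row_abs_sum M i) -> `|\det M| < (h n)%:~R).
Proof.
have M_unit : M \in unitmx by rewrite unitmxE unitfE.
have ge2 := inv_row_abs_sum_ge2 H01 M_unit.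
have gt2 := inv_row_abs_sum_gt2 H01 M_unit.
split; first exact: ge2.
split; last by case=> i /gt2.
move=> det_max i; apply/eqP; rewrite eq_le ge2 andbT leNgt.
by apply/negP => /gt2; rewrite det_max ltxx.
Qed.
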